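(* Let $R \in \mathcal{R}$, $t \in R$ and $t \triangleright^* t'$. Then $t' \in R$.
   Context: With disjoint sets of $\lambda$-variables $x,y,\dots$ and $\mu$-variables $a,b,\dots$, terms and $\mathcal{E}$-terms are $\mathcal{T} ::= x \mid \lambda x.\mathcal{T} \mid (\mathcal{T}\;\mathcal{E}) \mid \langle \mathcal{T},\mathcal{T}\rangle \mid \omega_1\mathcal{T} \mid \omega_2\mathcal{T} \mid \mu a.\mathcal{T} \mid (a\;\mathcal{T})$, $\mathcal{E} ::= \mathcal{T} \mid \pi_1 \mid \pi_2 \mid [x.\mathcal{T}, y.\mathcal{T}]$ (up to renaming of bound variables). The one-step reduction $\triangleright$ is the closure under all constructors of: $(\lambda x.u\;v)\triangleright u[x:=v]$; $(\langle t_1,t_2\rangle\;\pi_i)\triangleright t_i$; $(\omega_i t\;[x_1.u_1,x_2.u_2])\triangleright u_i[x_i:=t]$; $((t\;[x_1.u_1,x_2.u_2])\;\varepsilon)\triangleright(t\;[x_1.(u_1\;\varepsilon),x_2.(u_2\;\varepsilon)])$; $(\mu a.t\;\varepsilon)\triangleright\mu a.t[a:=^*\varepsilon]$, where $t[a:=^*\varepsilon]$ replaces inductively each subterm $(a\;v)$ by $(a\;(v\;\varepsilon))$; $\triangleright^*$ is its reflexive-transitive closure. $\mathcal{N}$ is the set of strongly normalizable terms. For sets $K,L$ of terms: $K\to L=\{t\in\mathcal{T} : (t\;u)\in L \text{ for all } u\in K\}$; $K\wedge L=\{t : (t\;\pi_1)\in K, (t\;\pi_2)\in L\}$; $K\vee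 L=\{t :$ for all $\lambda$-variables $x,y$ and all $u,v\in\mathcal{N}$, if $u[x:=r]\in\mathcal{N}$ and $v[y:=s]\in\mathcal{N}$ for all $r\in K,s\in L$, then $(t\;[x.u,y.v])\in\mathcal{N}\}$. The set $\mathcal{R}$ of reducibility candidates is the smallest set of sets of terms containing $\mathcal{N}$ and closed under $\to,\wedge,\vee$. *)

(* Lambda-mu calculus with pairs/sums, de Bruijn indices:
   two independent index spaces, one for lambda-variables (Var) and one
   for mu-variables (MApp). *)
From Stdlib Require Import Arith Relations.

Inductive term : Type :=
  | Var  : nat -> term
  | Lam  : term -> term
  | App  : term -> elim -> term
  | Pair : term -> term -> term
  | Inj1 : term -> term
  | Inj2 : term -> term
  | Mu   : term -> term                (* mu a. t (binds mu index 0) *)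
  | MApp : nat -> term -> term
with elim : Type :=
  | ETm  : term -> elim
  | Pi1  : elim
  | Pi2  : elim
  | Case : term -> term -> elim.       (* [x.u, y.v], each branch binds lambda index 0 *)

Fixpoint lift_l (c : nat) (t : term) : term :=
  match t with
  | Var n => Var (if c <=? n then S n else n)
  | Lam u => Lam (lift_l (S c) u)
  | App u e => App (lift_l c u) (liftE_l c e)
  | Pair u v => Pair (lift_l c u) (lift_l c v)
  | Inj1 u => Inj1 (lift_l c u)
  | Inj2 u => Inj2 (lift_l c u)
  | Mu u => Mu (lift_l c u)
  | MApp a u => MApp a (lift_l c u)
  end
with liftE_l (c : nat) (e : elim) : elim :=
  match e with
  | ETm u => ETm (lift_l c u)
  | Pi1 => Pi1
  | Pi2 => Pi2
  | Case u v => Case (lift_l (S c) u) (lift_l (S c) v)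
  end.

Fixpoint lift_m (c : nat) (t : term) : term :=
  match t with
  | Var n => Var n
  | Lam u => Lam (lift_m c u)
  | App u e => App (lift_m c u) (liftE_m c e)
  | Pair u v => Pair (lift_m c u) (lift_m c v)
  | Inj1 u => Inj1 (lift_m c u)
  | Inj2 u => Inj2 (lift_m c u)
  | Mu u => Mu (lift_m (S c) u)
  | MApp a u => MApp (if c <=? a then S a else a) (lift_m c u)
  end
with liftE_m (c : nat) (e : elim) : elim :=
  match e with
  | ETm u => ETm (lift_m c u)
  | Pi1 => Pi1
  | Pi2 => Pi2
  | Case u v => Case (lift_m c u) (lift_m c v)
  end.

(* capture-avoiding substitution t[k := s] of a lambda-variable;
   the indices above k are decremented (the binder disappears) *)
Fixpoint subst_l (k : nat) (s : term) (t : term) : term :=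
  match t with
  | Var n => if n =? k then s else if k <? n then Var (pred n) else Var n
  | Lam u => Lam (subst_l (S k) (lift_l 0 s) u)
  | App u e => App (subst_l k s u) (substE_l k s e)
  | Pair u v => Pair (subst_l k s u) (subst_l k s v)
  | Inj1 u => Inj1 (subst_l k s u)
  | Inj2 u => Inj2 (subst_l k s u)
  | Mu u => Mu (subst_l k (lift_m 0 s) u)
  | MApp a u => MApp a (subst_l k s u)
  end
with substE_l (k : nat) (s : term) (e : elim) : elim :=
  match e with
  | ETm u => ETm (subst_l k s u)
  | Pi1 => Pi1
  | Pi2 => Pi2
  | Case u v => Case (subst_l (S k) (lift_l 0 s) u) (subst_l (S k) (lift_l 0 s) v)
  end.

(* mu-substitution t[a :=* e]: every subterm (a v) becomes (a (v e)) *)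
Fixpoint msubst (a : nat) (e : elim) (t : term) : term :=
  match t with
  | Var n => Var n
  | Lam u => Lam (msubst a (liftE_l 0 e) u)
  | App u f => App (msubst a e u) (msubstE a e f)
  | Pair u v => Pair (msubst a e u) (msubst a e v)
  | Inj1 u => Inj1 (msubst a e u)
  | Inj2 u => Inj2 (msubst a e u)
  | Mu u => Mu (msubst (S a) (liftE_m 0 e) u)
  | MApp b u =>
      if b =? a then MApp b (App (msubst a e u) e) else MApp b (msubst a e u)
  end
with msubstE (a : nat) (e : elim) (f : elim) : elim :=
  match f with
  | ETm u => ETm (msubst a e u)
  | Pi1 => Pi1
  | Pi2 => Pi2
  | Case u v => Case (msubst a (liftE_l 0 e) u) (msubst a (liftE_l 0 e) v)
  end.

Inductive step : term -> term -> Prop :=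
  | st_beta u v : step (App (Lam u) (ETm v)) (subst_l 0 v u)
  | st_pi1 t1 t2 : step (App (Pair t1 t2) Pi1) t1
  | st_pi2 t1 t2 : step (App (Pair t1 t2) Pi2) t2
  | st_case1 t u1 u2 : step (App (Inj1 t) (Case u1 u2)) (subst_l 0 t u1)
  | st_case2 t u1 u2 : step (App (Inj2 t) (Case u1 u2)) (subst_l 0 t u2)
  | st_comm t u1 u2 e :
      step (App (App t (Case u1 u2)) e)
           (App t (Case (App u1 (liftE_l 0 e)) (App u2 (liftE_l 0 e))))
  | st_mu t e : step (App (Mu t) e) (Mu (msubst 0 (liftE_m 0 e) t))
  | st_Lam t t' : step t t' -> step (Lam t) (Lam t')
  | st_AppL t t' e : step t t' -> step (App t e) (App t' e)
  | st_AppR t e e' : stepE e e' -> step (App t e) (App t e')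
  | st_PairL t t' u : step t t' -> step (Pair t u) (Pair t' u)
  | st_PairR t u u' : step u u' -> step (Pair t u) (Pair t u')
  | st_Inj1 t t' : step t t' -> step (Inj1 t) (Inj1 t')
  | st_Inj2 t t' : step t t' -> step (Inj2 t) (Inj2 t')
  | st_Mu t t' : step t t' -> step (Mu t) (Mu t')
  | st_MApp a t t' : step t t' -> step (MApp a t) (MApp a t')
with stepE : elim -> elim -> Prop :=
  | stE_Tm t t' : step t t' -> stepE (ETm t) (ETm t')
  | stE_CaseL u u' v : step u u' -> stepE (Case u v) (Case u' v)
  | stE_CaseR u v v' : step v v' -> stepE (Case u v) (Case u v').

Definition steps : term -> term -> Prop := clos_refl_trans term step.

Definition SN (t : term) : Prop := Acc (fun u v => step v u) t.

Definition tset := term -> Prop.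

Definition Arrow (K L : tset) : tset :=
  fun t => forall u, K u -> L (App t (ETm u)).

Definition Wedge (K L : tset) : tset :=
  fun t => K (App t Pi1) /\ L (App t Pi2).

(* [x.u, y.v] in de Bruijn form: u and v have their bound variable as index 0 *)
Definition Vee (K L : tset) : tset :=
  fun t => forall u v, SN u -> SN v ->
    (forall r, K r -> SN (subst_l 0 r u)) ->
    (forall s, L s -> SN (subst_l 0 s v)) ->
    SN (App t (Case u v)).

Inductive RC : tset -> Prop :=
  | RC_SN : RC SN
  | RC_arrow K L : RC K -> RC L -> RC (Arrow K L)
  | RC_wedge K L : RC K -> RC L -> RC (Wedge K L)
  | RC_vee K L : RC K -> RC L -> RC (Vee K L).

From Stdlib Require Import Relations.

(* It suffices to close candidates under a single step, by induction on [RC]: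
   a step of [t] is also a step of [t] applied to any eliminator, so it is
   pushed into the defining condition of [Arrow], [Wedge] and [Vee]. *)

Lemma SN_step (t t' : term) : SN t -> step t t' -> SN t'.
Proof. intros [Hacc] Hs. exact (Hacc t' Hs). Qed.

Lemma RC_step (R : tset) : RC R -> forall t t', R t -> step t t' -> R t'.
Proof.
  induction 1 as [|K L _ _ _ IHL|K L _ IHK _ IHL|K L _ _ _ _];
    intros t t' Ht Hs.
  - exact (SN_step t t' Ht Hs).
  - intros u Hu. apply (IHL (App t (ETm u))); [exact (Ht u Hu) | now constructor].
  - destruct Ht as [H1 H2]. split.
    + apply (IHK (App t Pi1)); [exact H1 | now constructor].
    + apply (IHL (App t Pi2)); [exact H2 | now constructor].
  - intros u v Hu Hv HK HL.
    apply (SN_step (App t (Case u v))); [exact (Ht u v Hu Hv HK HL) | now constructor].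
Qed.

Theorem lemma8 (R : tset) (t t' : term) :
  RC R -> R t -> steps t t' -> R t'.
Proof.
  intros HR Ht Hs. revert Ht.
  induction Hs as [t t' Hs | t | t t1 t' _ IH1 _ IH2]; intros Ht.
  - exact (RC_step R HR t t' Ht Hs).
  - exact Ht.
  - exact (IH2 (IH1 Ht)).
Qed.
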